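(* Fix $\gamma>1$, $\zeta_0>1$, $S_0>0$, $J>0$, $E_0<0$ with $(u_0,E_0)\in\mathcal T_{\rm acc}$, and let $(\bar u_1,\bar E)$ and $l_{\max}$ be as in the context. Define on $[0,l_{\max})$ $$\bar a_{11}:=1-\frac{\bar u_1^{\gamma+1}}{u_s^{\gamma+1}},\qquad \bar a:=\frac{\bar u_1^{\gamma-1}\big(\bar E-(\gamma+1)\bar u_1'\bar u_1\big)}{\gamma S_0J^{\gamma-1}},$$ regarded as functions of $\mathbf x=(x_1,x_2)$ depending only on $x_1$. Then for each $L\in(0,l_{\max})$ there exists a constant $\lambda_L>0$ such that, with $\Omega_L=(0,L)\times(-1,1)$: (a) $-\partial_1\bar a_{11}\ge\lambda_L$ in $\overline{\Omega_L}$; (b) $-\bar a\ge\lambda_L$ in $\overline{\Omega_L}$; (c) $-2\bar a-(2m-1)\partial_1\bar a_{11}\ge\lambda_L$ in $\overline{\Omega_L}$ for $m=0,1,2,3$; (d) setting $\mathfrak a_1(L):=\min_{\overline{\Omega_L}}(-\partial_1\bar a_{11})$, $\mathfrak a_2(L):=\min_{\overline{\Omega_L}}(-\bar a)$, $\mathfrak c_m(L):=\min_{\overline{\Omega_L}}(-2\bar a-(2m-1)\partial_1\bar a_{11})$ for $m=0,1,2,3$, one has $\lim_{L\to l_{\max}-}\mathfrak a_1(L)=\lim_{L\to l_{\max}-}\mathfrak a_2(L)=\lim_{L\to l_{\max}-}\mathfrak c_m(L)=0$ for $m=0,1,2,3$.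
   Context: Given $\gamma>1$, $J>0$, $S_0>0$, $\zeta_0>1$: $u_s:=(\gamma S_0J^{\gamma-1})^{1/(\gamma+1)}$, $\bar u_i:=\zeta_0u_s$, $\bar\rho_i:=J/\bar u_i$, $H(u):=\int_{u_s}^{u}\frac{J}{\bar u_i t^{\gamma+1}}(t^{\gamma+1}-u_s^{\gamma+1})(\bar u_i-t)\,dt$, $\mathcal T_{\rm acc}:=\{(u,E):u>0,\ \tfrac12E^2=H(u),\ (u-u_s)E\ge0\}$ (for $E_0<0$, $0<u_0<u_s$). $(\bar u_1,\bar E)$ is the solution of $\bar u_1'=\bar E\bar u_1^\gamma/(\bar u_1^{\gamma+1}-u_s^{\gamma+1})$, $\bar E'=J/\bar u_1-\bar\rho_i$, $(\bar u_1,\bar E)(0)=(u_0,E_0)$; it is smooth with $\bar u_1'>0$ on its maximal interval $[0,l_{\max})$, $l_{\max}<\infty$, and $\lim_{x_1\to l_{\max}-}\bar u_1'(x_1)=0$. ($\bar a_{11}$ and $\bar a$ are the coefficients of the linearization of the potential flow equation at the background state, normalized by the coefficient of $\partial_{22}$.) *)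

From Stdlib Require Import Reals.
From Coquelicot Require Import Coquelicot.
Open Scope R_scope.

Definition u_s (gam S0 J : R) : R :=
  Rpower (gam * S0 * Rpower J (gam - 1)) (1 / (gam + 1)).
Definition ubar_i (gam S0 J zeta0 : R) : R := zeta0 * u_s gam S0 J.
Definition rhobar_i (gam S0 J zeta0 : R) : R := J / ubar_i gam S0 J zeta0.

Definition Hfun (gam S0 J zeta0 u : R) : R :=
  RInt (fun t => J / (ubar_i gam S0 J zeta0 * Rpower t (gam + 1))
                 * (Rpower t (gam + 1) - Rpower (u_s gam S0 J) (gam + 1))
                 * (ubar_i gam S0 J zeta0 - t))
       (u_s gam S0 J) u.

Definition T_acc (gam S0 J zeta0 u E : R) : Prop :=
  0 < u /\ E ^ 2 / 2 = Hfun gam S0 J zeta0 u /\ 0 <= (u - u_s gam S0 J) * E.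

Definition Ivl (l : R) : R -> Prop := fun x => 0 <= x < l.

Definition deriv_within (D : R -> Prop) (f : R -> R) (x l : R) : Prop :=
  filterlim (fun y => (f y - f x) / (y - x))
            (within (fun y => D y /\ y <> x) (locally x)) (locally l).

Definition cont_within (D : R -> Prop) (f : R -> R) (x : R) : Prop :=
  filterlim f (within D (locally x)) (locally (f x)).

(* (u, E) is a C^1 solution on [0,l) of
     u' = E u^gam / (u^(gam+1) - u_s^(gam+1)),  E' = J/u - rhobar_i,
   (u,E)(0) = (u0,E0), with derivative du = u' > 0 on [0,l).
   The first equation is imposed wherever its denominator is nonzero;
   at a sonic point u' is determined by continuity of du. *)
Definition is_sol (gam S0 J zeta0 u0 E0 l : R) (u E du : R -> R) : Prop :=
  0 < l /\ u 0 = u0 /\ E 0 = E0 /\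
  forall x, Ivl l x ->
    deriv_within (Ivl l) u x (du x) /\
    deriv_within (Ivl l) E x (J / u x - rhobar_i gam S0 J zeta0) /\
    cont_within (Ivl l) du x /\
    0 < du x /\
    (Rpower (u x) (gam + 1) <> Rpower (u_s gam S0 J) (gam + 1) ->
       du x = E x * Rpower (u x) gam
              / (Rpower (u x) (gam + 1) - Rpower (u_s gam S0 J) (gam + 1))).

Definition a11bar (gam S0 J : R) (u : R -> R) (x1 : R) : R :=
  1 - Rpower (u x1) (gam + 1) / Rpower (u_s gam S0 J) (gam + 1).

Definition abar (gam S0 J : R) (u E du : R -> R) (x1 : R) : R :=
  Rpower (u x1) (gam - 1) * (E x1 - (gam + 1) * du x1 * u x1)
  / (gam * S0 * Rpower J (gam - 1)).

Definition clOmega (L : R) (x : R * R) : Prop :=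
  0 <= fst x <= L /\ -1 <= snd x <= 1.

Definition is_min_on (A : R * R -> Prop) (f : R * R -> R) (m : R) : Prop :=
  (exists x, A x /\ f x = m) /\ (forall x, A x -> m <= f x).

From Stdlib Require Import Reals Lra ClassicalEpsilon.
From Coquelicot Require Import Coquelicot.
Open Scope R_scope.

(* Along the solution the ODE eliminates E: E = u' (u - u_s^(gam+1) / u^gam), at a sonic
   point by continuity.  Substituting, -d1 a11, -a and -2a - (2m-1) d1 a11 all take the form
   u' G(u) with G(v) = al v^gam / u_s^(gam+1) + be / v, al > 0, be >= 0 (al = gam - 1 for
   m = 0).  As u increases from u0 > 0 and u' -> 0 keeps it bounded, G(u) stays between
   positive constants, so each coefficient is continuous and positive, attains its minimum on
   [0, L], and that minimum is at most u'(L) max G -> 0.  Since -d1 a11 > 0, the combination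
   for m is increasing in m, so lambda_L can be the least of the minima for a11, a and m = 0. *)

Local Notation punctured D x := (within (fun y => D y /\ y <> x) (locally x)).

Lemma ball_Rabs (x e y : R) : ball x e y <-> Rabs (y - x) < e.
Proof. reflexivity. Qed.

Lemma Ivl_punctured_proper (l x : R) : Ivl l x -> ProperFilter' (punctured (Ivl l) x).
Proof.
  intros [Hx0 Hxl]. constructor.
  - intros [eps Heps].
    pose proof (Rmin_l eps (l - x)). pose proof (Rmin_r eps (l - x)).
    assert (Hp : 0 < Rmin eps (l - x)) by (apply Rmin_pos; [apply cond_pos | lra]).
    apply (Heps (x + Rmin eps (l - x) / 2)); [| split; [unfold Ivl |]; lra].
    apply ball_Rabs. rewrite Rabs_right by lra. simpl. lra.
  - apply within_filter, locally_filter.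
Qed.

Lemma deriv_within_Ivl_unique l f x d1 d2 : Ivl l x ->
  deriv_within (Ivl l) f x d1 -> deriv_within (Ivl l) f x d2 -> d1 = d2.
Proof.
  intros Hx.
  exact (filterlim_locally_unique (K := R_AbsRing) (V := R_NormedModule)
           (FF := Ivl_punctured_proper l x Hx) _ _ _).
Qed.

Lemma cont_within_punctured D f x :
  cont_within D f x -> filterlim f (punctured D x) (locally (f x)).
Proof. apply filterlim_filter_le_1. intros P. unfold within. apply filter_imp. tauto. Qed.

Lemma punctured_cont_within D f x :
  filterlim f (punctured D x) (locally (f x)) -> cont_within D f x.
Proof.
  intros Hf P HP. specialize (Hf P HP). unfold filtermap, within in *.
  revert Hf. apply filter_imp. intros y Hy Dy.
  destruct (Req_dec y x) as [->|Hyx]; [exact (locally_singleton _ _ HP) | auto].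
Qed.

Lemma cont_within_Ivl_eq l f g x : Ivl l x ->
  cont_within (Ivl l) f x -> cont_within (Ivl l) g x ->
  punctured (Ivl l) x (fun y => f y = g y) -> f x = g x.
Proof.
  intros Hx Hf Hg Hfg.
  apply (filterlim_locally_unique (K := R_AbsRing) (V := R_NormedModule)
           (FF := Ivl_punctured_proper l x Hx) g).
  - exact (filterlim_ext_loc f g Hfg (cont_within_punctured _ _ _ Hf)).
  - exact (cont_within_punctured _ _ _ Hg).
Qed.

Lemma deriv_within_cont D f x d : deriv_within D f x d -> cont_within D f x.
Proof.
  intros Hd. apply punctured_cont_within.
  assert (Hh : filterlim (fun y => y - x) (punctured D x) (locally 0)).
  { intros P [eps HP]. exists eps. intros y Hy _. apply HP, ball_Rabs.
    rewrite Rminus_0_r. exact Hy. }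
  assert (Hs : filterlim (fun y => f x + (f y - f x) / (y - x) * (y - x))
                 (punctured D x) (locally (f x + d * 0))).
  { apply (filterlim_comp_2 (H := locally (d * 0)) _ _ Rplus (filterlim_const (f x))).
    - exact (filterlim_comp_2 _ _ Rmult Hd Hh (filterlim_mult (K := R_AbsRing) d 0)).
    - exact (filterlim_plus (V := R_NormedModule) (f x) (d * 0)). }
  rewrite Rmult_0_r, Rplus_0_r in Hs.
  refine (filterlim_ext_loc _ _ _ Hs).
  unfold within. apply filter_forall. intros y [_ Hyx]. field. lra.
Qed.

Lemma cont_within_mult D f g x : cont_within D f x -> cont_within D g x ->
  cont_within D (fun y => f y * g y) x.
Proof.
  intros Hf Hg. exact (filterlim_comp_2 f g Rmult Hf Hg (filterlim_mult (K := R_AbsRing) _ _)).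
Qed.

Lemma cont_within_comp D u G x : cont_within D u x -> continuity_pt G (u x) ->
  cont_within D (fun y => G (u y)) x.
Proof.
  intros Hu HG. exact (filterlim_comp _ _ _ u G _ _ _ Hu (proj1 (continuity_pt_filterlim _ _) HG)).
Qed.

Lemma cont_within_ext D f g x : D x -> (forall y, D y -> f y = g y) ->
  cont_within D g x -> cont_within D f x.
Proof.
  intros Dx Hfg Hg. unfold cont_within. rewrite (Hfg x Dx).
  apply (filterlim_ext_loc g f); [| exact Hg].
  unfold within. apply filter_forall. intros y Dy. symmetry. auto.
Qed.

Lemma deriv_within_comp D u G x d g' : deriv_within D u x d -> derivable_pt_lim G (u x) g' ->
  deriv_within D (fun y => G (u y)) x (g' * d).
Proof.
  intros Hu HG.
  (* Caratheodory slope of G at u x: continuous at u x by differentiability of G *)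
  set (Q := fun v => if Req_EM_T v (u x) then g' else (G v - G (u x)) / (v - u x)).
  assert (HQ : filterlim Q (locally (u x)) (locally g')).
  { apply filterlim_locally. intros [eps He].
    destruct (HG eps He) as [del Hdel]. exists del. intros v Hv. change R in v.
    rewrite ball_Rabs in Hv |- *. unfold Q.
    destruct (Req_EM_T v (u x)) as [_|Hne].
    - rewrite Rminus_eq_0, Rabs_R0. exact He.
    - specialize (Hdel (v - u x) ltac:(lra) Hv).
      replace (u x + (v - u x)) with v in Hdel by ring. exact Hdel. }
  assert (Hc : filterlim u (punctured D x) (locally (u x))).
  { exact (cont_within_punctured _ _ _ (deriv_within_cont _ _ _ _ Hu)). }
  refine (filterlim_ext_loc _ _ _
    (filterlim_comp_2 _ _ Rmult (filterlim_comp _ _ _ u Q _ _ _ Hc HQ) Hu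
       (filterlim_mult (K := R_AbsRing) _ _))).
  unfold within. apply filter_forall. intros y [_ Hyx]. unfold Q.
  destruct (Req_EM_T (u y) (u x)) as [Heq|Hne].
  - rewrite Heq, !Rminus_eq_0. unfold Rdiv. ring.
  - field. split; lra.
Qed.

Lemma deriv_within_Ivl_interior l f x d : 0 < x < l ->
  deriv_within (Ivl l) f x d -> is_derive f x d.
Proof.
  intros Hx Hd. apply is_derive_Reals. intros eps He.
  destruct (proj1 (filterlim_locally _ _) Hd (mkposreal eps He)) as [del Hdel].
  assert (Hp : 0 < Rmin del (Rmin x (l - x))) by (repeat apply Rmin_pos; try apply cond_pos; lra).
  exists (mkposreal _ Hp). intros h Hh0 Hh. simpl in Hh.
  pose proof (Rmin_l del (Rmin x (l - x))). pose proof (Rmin_r del (Rmin x (l - x))).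
  pose proof (Rmin_l x (l - x)). pose proof (Rmin_r x (l - x)).
  apply Rabs_def2 in Hh as Hh'.
  assert (Hq := Hdel (x + h)). rewrite ball_Rabs in Hq.
  replace (x + h - x) with h in Hq by ring.
  apply Hq; [lra | split; [unfold Ivl; lra | lra]].
Qed.

Lemma cont_within_Ivl_Rmax_0 l f c : 0 <= c < l -> cont_within (Ivl l) f c ->
  continuity_pt (fun x => f (Rmax 0 x)) c.
Proof.
  intros Hc Hf. apply continuity_pt_filterlim.
  cbv beta. rewrite (Rmax_right 0 c) by lra.
  apply (filterlim_comp _ _ _ (Rmax 0) f _ (within (Ivl l) (locally c)) _); [| exact Hf].
  intros P [eps HP]. pose proof (Rmin_l eps (l - c)). pose proof (Rmin_r eps (l - c)).
  assert (Hp : 0 < Rmin eps (l - c)) by (apply Rmin_pos; [apply cond_pos | lra]).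
  exists (mkposreal _ Hp). intros y Hy. rewrite ball_Rabs in Hy. simpl in Hy.
  apply Rabs_def2 in Hy.
  apply HP; [apply ball_Rabs, Rabs_def1 | unfold Ivl]; unfold Rmax; destruct (Rle_dec 0 y); lra.
Qed.

Lemma Ivl_MVT l f df a b : 0 <= a < b -> b < l ->
  (forall x, Ivl l x -> deriv_within (Ivl l) f x (df x)) ->
  exists c, a <= c <= b /\ f b - f a = df c * (b - a).
Proof.
  intros Hab Hbl Hf.
  (* on [a, b], f agrees with f o (Rmax 0), which is continuous in the usual sense at 0 *)
  set (g := fun x => f (Rmax 0 x)).
  destruct (MVT_gen g a b df) as [c [Hc Hgc]];
    rewrite ?Rmin_left, ?Rmax_right in * by lra.
  - intros x Hx. apply (is_derive_ext_loc f g).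
    + exists (mkposreal x ltac:(lra)). intros y Hy. rewrite ball_Rabs in Hy. simpl in Hy.
      apply Rabs_def2 in Hy. unfold g. rewrite Rmax_right by lra. reflexivity.
    + apply (deriv_within_Ivl_interior l); [lra | apply Hf; unfold Ivl; lra].
  - intros x Hx. apply (cont_within_Ivl_Rmax_0 l); [lra |].
    apply (deriv_within_cont _ _ _ (df x)), Hf. unfold Ivl; lra.
  - exists c. split; [exact Hc |]. unfold g in Hgc. rewrite !Rmax_right in Hgc by lra. exact Hgc.
Qed.

Lemma Ivl_min_attained l L f : 0 <= L < l ->
  (forall x, Ivl l x -> cont_within (Ivl l) f x) ->
  exists m, 0 <= m <= L /\ forall x, 0 <= x <= L -> f m <= f x.
Proof.
  intros HL Hf.
  destruct (continuity_ab_min (fun x => f (Rmax 0 x)) 0 L) as [m [Hm Hm0]]; [lra | |].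
  - intros c Hc. apply (cont_within_Ivl_Rmax_0 l); [lra | apply Hf; unfold Ivl; lra].
  - exists m. split; [exact Hm0 |]. intros x Hx. specialize (Hm x Hx).
    rewrite !Rmax_right in Hm by lra. exact Hm.
Qed.

Lemma at_left_of_Ivl l (P : R -> Prop) : 0 < l -> (forall y, 0 < y < l -> P y) -> at_left l P.
Proof.
  intros Hl HP. exists (mkposreal l Hl). intros y Hy Hyl.
  rewrite ball_Rabs in Hy. simpl in Hy. apply Rabs_def2 in Hy. apply HP. lra.
Qed.

Definition vanishing_clOmega_minima (l : R) (F : R * R -> R) (A : R -> R) : Prop :=
  (forall L, 0 < L < l -> is_min_on (clOmega L) F (A L) /\ 0 < A L) /\
  filterlim A (at_left l) (locally 0).

Lemma min_clOmega_vanishes l f : 0 < l ->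
  (forall x, Ivl l x -> cont_within (Ivl l) f x /\ 0 < f x) ->
  filterlim f (at_left l) (locally 0) ->
  exists A, vanishing_clOmega_minima l (fun x => f (fst x)) A.
Proof.
  intros Hl Hf Hlim.
  assert (Hmin : forall L, exists m, 0 < L < l ->
            is_min_on (clOmega L) (fun x => f (fst x)) m /\ 0 < m <= f L).
  { intros L. destruct (Rlt_le_dec 0 L) as [HL0|HL0]; [| exists 0; lra].
    destruct (Rlt_le_dec L l) as [HLl|HLl]; [| exists 0; lra].
    destruct (Ivl_min_attained l L f) as [m [Hm Hmin]]; [lra | intros x Hx; apply Hf, Hx |].
    exists (f m). intros _. split; [split |].
    - exists (m, 0). split; [unfold clOmega; simpl; lra | reflexivity].
    - intros [x1 x2] [Hx1 _]. apply Hmin, Hx1.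
    - split; [apply Hf; unfold Ivl; lra | apply Hmin; lra]. }
  destruct (choice _ Hmin) as [A HA].
  exists A. unfold vanishing_clOmega_minima. split; [intros L HL; split; apply HA; auto |].
  apply (filterlim_le_le (fun _ => 0) A f (Finite 0)); [| apply filterlim_const | exact Hlim].
  apply at_left_of_Ivl; [exact Hl |]. intros y Hy. destruct (HA y Hy) as [_ HAy]. lra.
Qed.

Section Positive_derivative.

Variables (l : R) (u du : R -> R).
Hypothesis Hu : forall x, Ivl l x -> deriv_within (Ivl l) u x (du x).
Hypothesis Hdu_pos : forall x, Ivl l x -> 0 < du x.

Lemma deriv_pos_increasing a b : 0 <= a < b -> b < l -> u a < u b.
Proof.
  intros Hab Hbl. destruct (Ivl_MVT l u du a b Hab Hbl Hu) as [c [Hc Huc]].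
  assert (0 < du c * (b - a)) by (apply Rmult_lt_0_compat; [apply Hdu_pos; unfold Ivl |]; lra).
  lra.
Qed.

Lemma deriv_pos_min_at_0 x : Ivl l x -> u 0 <= u x.
Proof.
  intros [Hx0 Hxl]. destruct (Req_dec x 0) as [->|Hx]; [lra |].
  left. apply deriv_pos_increasing; lra.
Qed.

Hypothesis Hl : 0 < l.
Hypothesis Hdu_lim : filterlim du (at_left l) (locally 0).

Lemma deriv_vanishing_bounded : exists B, forall x, Ivl l x -> u x <= B.
Proof.
  destruct (Hdu_lim (ball 0 1) (locally_ball 0 (mkposreal 1 Rlt_0_1))) as [d Hd].
  set (a := Rmax (l - d / 2) (l / 2)).
  pose proof (cond_pos d). pose proof (Rmax_l (l - d / 2) (l / 2)).
  assert (Ha : 0 < a < l /\ l - d < a).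
  { unfold a, Rmax. destruct (Rle_dec (l - d / 2) (l / 2)); lra. }
  exists (u a + l). intros x [Hx0 Hxl].
  destruct (Rlt_le_dec a x) as [Hax|Hxa].
  - destruct (Ivl_MVT l u du a x) as [c [Hc Huc]]; [lra | lra | exact Hu |].
    assert (Hdc : du c < 1).
    { assert (Hb := Hd c). rewrite !ball_Rabs in Hb. simpl in Hb.
      assert (Hb' : Rabs (du c - 0) < 1) by (apply Hb; [apply Rabs_def1 |]; lra).
      apply Rabs_def2 in Hb'. lra. }
    assert (du c * (x - a) <= 1 * (x - a)) by (apply Rmult_le_compat_r; lra). lra.
  - destruct (Req_dec x a) as [->|Hne]; [lra |].
    assert (u x < u a) by (apply deriv_pos_increasing; lra). lra.
Qed.

Hypothesis Hdu_cont : forall x, Ivl l x -> cont_within (Ivl l) du x.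

Lemma profile_min_vanishes f G : 0 < u 0 ->
  (forall v, 0 < v -> continuity_pt G v /\ 0 < G v) ->
  (forall x, Ivl l x -> f x = du x * G (u x)) ->
  exists A, vanishing_clOmega_minima l (fun x => f (fst x)) A.
Proof.
  intros Hu0 HG Hf.
  assert (Hupos : forall x, Ivl l x -> 0 < u x).
  { intros x Hx. pose proof (deriv_pos_min_at_0 x Hx). lra. }
  destruct deriv_vanishing_bounded as [B HB].
  assert (Hu0B : u 0 <= B) by (apply HB; unfold Ivl; lra).
  destruct (continuity_ab_maj G (u 0) B Hu0B) as [vM [HM HvM]].
  { intros v Hv. apply HG. lra. }
  assert (HGu : forall x, Ivl l x -> 0 < G (u x) <= G vM).
  { intros x Hx. split; [apply HG, Hupos, Hx | apply HM].
    split; [apply deriv_pos_min_at_0 | apply HB]; exact Hx. }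
  apply min_clOmega_vanishes; [exact Hl | |].
  - intros x Hx. split.
    + apply (cont_within_ext _ f (fun y => du y * G (u y)) x Hx Hf).
      apply cont_within_mult; [apply Hdu_cont, Hx |].
      apply cont_within_comp; [apply (deriv_within_cont _ _ _ (du x)), Hu, Hx |].
      apply HG, Hupos, Hx.
    + rewrite (Hf x Hx). apply Rmult_lt_0_compat; [apply Hdu_pos, Hx | apply HGu, Hx].
  - assert (Hbound : filterlim (fun y => du y * G vM) (at_left l) (locally (0 * G vM))).
    { exact (filterlim_comp_2 _ _ Rmult Hdu_lim (filterlim_const (G vM))
               (filterlim_mult (K := R_AbsRing) 0 (G vM))). }
    rewrite Rmult_0_l in Hbound.
    apply (filterlim_le_le (fun _ => 0) f (fun y => du y * G vM) (Finite 0));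
      [| apply filterlim_const | exact Hbound].
    apply at_left_of_Ivl; [exact Hl |]. intros y Hy.
    assert (Hy' : Ivl l y) by (unfold Ivl; lra).
    rewrite (Hf y Hy'). pose proof (Hdu_pos y Hy'). pose proof (HGu y Hy').
    split; [apply Rmult_le_pos | apply Rmult_le_compat_l]; lra.
Qed.

End Positive_derivative.

Lemma Rpower_pos x y : 0 < Rpower x y.
Proof. apply exp_pos. Qed.

Lemma Rpower_l_neq a b c : 0 < c -> 0 < a -> 0 < b -> a <> b -> Rpower a c <> Rpower b c.
Proof.
  intros Hc Ha Hb Hab. destruct (Rtotal_order a b) as [Hlt|[Heq|Hgt]]; [| contradiction |].
  - apply Rlt_not_eq, Rlt_Rpower_l; auto.
  - apply Rgt_not_eq, Rlt_Rpower_l; auto.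
Qed.

Lemma Rpower_minus_1 v y : 0 < v -> Rpower v (y - 1) = Rpower v y / v.
Proof.
  intros Hv. replace (Rpower v y) with (Rpower v (y - 1 + 1)) by (f_equal; ring).
  rewrite Rpower_plus, Rpower_1 by exact Hv. field. lra.
Qed.

Lemma continuity_pt_Rpower y v : 0 < v -> continuity_pt (fun x => Rpower x y) v.
Proof.
  intros Hv. apply derivable_continuous_pt. exists (y * Rpower v (y - 1)).
  apply derivable_pt_lim_power, Hv.
Qed.

Lemma Rpower_u_s gam S0 J : 0 < gam -> 0 < S0 ->
  Rpower (u_s gam S0 J) (gam + 1) = gam * S0 * Rpower J (gam - 1).
Proof.
  intros Hgam HS0. unfold u_s. rewrite Rpower_mult.
  replace (1 / (gam + 1) * (gam + 1)) with 1 by (field; lra).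
  apply Rpower_1. pose proof (Rpower_pos J (gam - 1)).
  apply Rmult_lt_0_compat; [apply Rmult_lt_0_compat |]; lra.
Qed.

Definition coef_profile (gam K al be v : R) : R := al * Rpower v gam / K + be / v.

Lemma coef_profile_cont_pos gam K al be v : 0 < K -> 0 < al -> 0 <= be -> 0 < v ->
  continuity_pt (coef_profile gam K al be) v /\ 0 < coef_profile gam K al be v.
Proof.
  intros HK Hal Hbe Hv. unfold coef_profile. split.
  - unfold Rdiv. apply continuity_pt_plus; apply continuity_pt_mult.
    + apply continuity_pt_mult; [apply continuity_pt_const; intros a b; reflexivity |].
      apply continuity_pt_Rpower, Hv.
    + apply continuity_pt_const. intros a b. reflexivity.
    + apply continuity_pt_const. intros a b. reflexivity.
    + apply continuity_pt_inv; [apply continuity_pt_id | lra].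
  - pose proof (Rpower_pos v gam).
    assert (0 < al * Rpower v gam / K) by (apply Rdiv_lt_0_compat; [apply Rmult_lt_0_compat |]; lra).
    assert (0 <= be / v) by (apply Rmult_le_pos; [| left; apply Rinv_0_lt_compat]; lra).
    lra.
Qed.

(* At a sonic point the ODE for u' degenerates; there the identity follows by continuity,
   since u is strictly increasing and hence sonic at most once. *)
Lemma sol_E_eq gam S0 J zeta0 u0 E0 l u E du : -1 < gam -> 0 < u0 ->
  is_sol gam S0 J zeta0 u0 E0 l u E du ->
  forall x, Ivl l x ->
  E x = du x * (u x - Rpower (u_s gam S0 J) (gam + 1) / Rpower (u x) gam).
Proof.
  intros Hgam Hu0 [Hl [Hu00 [_ Hpt]]].
  set (Us := Rpower (u_s gam S0 J) (gam + 1)). fold Us in Hpt.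
  assert (Hu : forall x, Ivl l x -> deriv_within (Ivl l) u x (du x)) by apply Hpt.
  assert (Hdu_pos : forall x, Ivl l x -> 0 < du x) by apply Hpt.
  assert (Hupos : forall x, Ivl l x -> 0 < u x).
  { intros x Hx. pose proof (deriv_pos_min_at_0 l u du Hu Hdu_pos x Hx). lra. }
  assert (Hreg : forall y, Ivl l y -> Rpower (u y) (gam + 1) <> Us ->
            E y = du y * (u y - Us / Rpower (u y) gam)).
  { intros y Hy Hns. destruct (Hpt y Hy) as [_ [_ [_ [_ Hode]]]].
    pose proof (Hupos y Hy). pose proof (Rpower_pos (u y) gam).
    rewrite (Hode Hns). rewrite Rpower_plus, Rpower_1 in Hns |- * by lra.
    field. split; [lra | intro; apply Hns; lra]. }
  intros x Hx.
  destruct (Req_dec (Rpower (u x) (gam + 1)) Us) as [Hs|Hns]; [| exact (Hreg x Hx Hns)].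
  apply (cont_within_Ivl_eq l E (fun y => du y * (u y - Us / Rpower (u y) gam)) x Hx).
  - exact (deriv_within_cont _ _ _ _ (proj1 (proj2 (Hpt x Hx)))).
  - apply cont_within_mult; [apply Hpt, Hx |].
    apply (cont_within_comp _ u (fun v => v - Us / Rpower v gam));
      [exact (deriv_within_cont _ _ _ _ (Hu x Hx)) |].
    apply continuity_pt_minus; [apply continuity_pt_id |].
    apply continuity_pt_div; [apply continuity_pt_const; intros a b; reflexivity
                             | apply continuity_pt_Rpower, Hupos, Hx
                             | apply Rgt_not_eq, Rpower_pos].
  - unfold within. apply filter_forall. intros y [Hy Hyx]. apply Hreg; [exact Hy |].
    rewrite <- Hs. apply Rpower_l_neq; [lra | apply Hupos, Hy | apply Hupos, Hx |].
    intro Heq. destruct Hy, Hx. destruct (Rlt_le_dec y x).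
    + assert (u y < u x) by (apply (deriv_pos_increasing l u du Hu Hdu_pos); lra). lra.
    + assert (u x < u y) by (apply (deriv_pos_increasing l u du Hu Hdu_pos); lra). lra.
Qed.

Lemma a11bar_deriv_within D gam S0 J u du x : 0 < u x -> deriv_within D u x (du x) ->
  deriv_within D (a11bar gam S0 J u) x
    (- ((gam + 1) * Rpower (u x) gam / Rpower (u_s gam S0 J) (gam + 1)) * du x).
Proof.
  intros Hux Hu. set (Us := Rpower (u_s gam S0 J) (gam + 1)).
  apply (deriv_within_comp D u (fun v => 1 - Rpower v (gam + 1) / Us)); [exact Hu |].
  apply is_derive_Reals.
  assert (HP := proj2 (is_derive_Reals _ _ _) (derivable_pt_lim_power (u x) (gam + 1) Hux)).
  assert (H := is_derive_minus _ _ _ _ _ (is_derive_const 1 (u x))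
                 (is_derive_scal_l _ _ _ (/ Us) HP)).
  replace (gam + 1 - 1) with gam in H by ring.
  unfold minus, plus, opp, zero, scal, mult in H. simpl in H.
  replace (- ((gam + 1) * Rpower (u x) gam / Us)) with (0 + - ((gam + 1) * Rpower (u x) gam * / Us))
    by (unfold Rdiv; ring).
  exact H.
Qed.

Lemma sol_coefficients gam zeta0 S0 J u0 E0 l u E du d1 :
  0 < gam -> 0 < S0 -> 0 < u0 ->
  is_sol gam S0 J zeta0 u0 E0 l u E du ->
  (forall x, Ivl l x -> deriv_within (Ivl l) (a11bar gam S0 J u) x (d1 x)) ->
  forall x, Ivl l x ->
    - d1 x = du x * coef_profile gam (gam * S0 * Rpower J (gam - 1)) (gam + 1) 0 (u x) /\
    - abar gam S0 J u E du x = du x * coef_profile gam (gam * S0 * Rpower J (gam - 1)) gam 1 (u x).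
Proof.
  intros Hgam HS0 Hu0 Hsol Hd1 x Hx.
  pose proof Hsol as [_ [Hu00 [_ Hpt]]].
  assert (Hux : 0 < u x).
  { assert (u 0 <= u x) by (apply (deriv_pos_min_at_0 l u du); [apply Hpt.. | exact Hx]). lra. }
  assert (HE := sol_E_eq gam S0 J zeta0 u0 E0 l u E du ltac:(lra) Hu0 Hsol x Hx).
  unfold abar, coef_profile. rewrite <- Rpower_u_s in * by assumption.
  pose proof (Rpower_pos (u_s gam S0 J) (gam + 1)). pose proof (Rpower_pos (u x) gam).
  split.
  - rewrite (deriv_within_Ivl_unique l _ x _ _ Hx (Hd1 x Hx)
               (a11bar_deriv_within _ gam S0 J u du x Hux (proj1 (Hpt x Hx)))).
    field. lra.
  - rewrite HE, Rpower_minus_1 by exact Hux. field. lra.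
Qed.

Lemma sol_profile_min_vanishes gam zeta0 S0 J u0 E0 l u E du K al be f :
  0 < K -> 0 < al -> 0 <= be -> 0 < u0 ->
  is_sol gam S0 J zeta0 u0 E0 l u E du ->
  filterlim du (at_left l) (locally 0) ->
  (forall x, Ivl l x -> f x = du x * coef_profile gam K al be (u x)) ->
  exists A, vanishing_clOmega_minima l (fun x => f (fst x)) A.
Proof.
  intros HK Hal Hbe Hu0 [Hl [Hu00 [_ Hpt]]] Hlim Hf.
  apply (profile_min_vanishes l u du) with (G := coef_profile gam K al be); try apply Hpt; auto.
  - lra.
  - intros v Hv. apply coef_profile_cont_pos; auto.
Qed.

Lemma uniform_lower_bound (P : R * R -> Prop) (a1 a2 : R * R -> R) (c : nat -> R * R -> R)
    m1 m2 m3 :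
  0 < m1 -> 0 < m2 -> 0 < m3 ->
  (forall x, P x -> m1 <= a1 x) -> (forall x, P x -> m2 <= a2 x) ->
  (forall x, P x -> m3 <= c 0%nat x) ->
  (forall m x, c m x = c 0%nat x + 2 * INR m * a1 x) ->
  exists lam, 0 < lam /\ (forall x, P x -> lam <= a1 x) /\ (forall x, P x -> lam <= a2 x) /\
    (forall m x, P x -> lam <= c m x).
Proof.
  intros H1 H2 H3 Ha1 Ha2 Hc0 Hc.
  pose proof (Rmin_l m1 (Rmin m2 m3)). pose proof (Rmin_r m1 (Rmin m2 m3)).
  pose proof (Rmin_l m2 m3). pose proof (Rmin_r m2 m3).
  exists (Rmin m1 (Rmin m2 m3)). split; [| split; [| split]].
  - repeat apply Rmin_pos; assumption.
  - intros x Hx. specialize (Ha1 x Hx). lra.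
  - intros x Hx. specialize (Ha2 x Hx). lra.
  - intros m x Hx. specialize (Ha1 x Hx). specialize (Hc0 x Hx). rewrite Hc.
    assert (0 <= 2 * INR m * a1 x) by (apply Rmult_le_pos; [pose proof (pos_INR m) |]; lra).
    lra.
Qed.

Theorem lemma4p1
  (gam zeta0 S0 J u0 E0 lmax : R) (u1 E du d1a11 : R -> R)
  (Hgam : 1 < gam) (Hzeta : 1 < zeta0) (HS0 : 0 < S0) (HJ : 0 < J)
  (HE0 : E0 < 0) (Hu0 : 0 < u0 < u_s gam S0 J)
  (Hacc : T_acc gam S0 J zeta0 u0 E0)
  (Hsol : is_sol gam S0 J zeta0 u0 E0 lmax u1 E du)
  (Hmax : forall (l : R) (u' E' du' : R -> R),
      is_sol gam S0 J zeta0 u0 E0 l u' E' du' ->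
      (forall x, Ivl (Rmin l lmax) x -> u' x = u1 x /\ E' x = E x) ->
      l <= lmax)
  (Hlim : filterlim du (at_left lmax) (locally 0))
  (Hd1a11 : forall x1, Ivl lmax x1 ->
      deriv_within (Ivl lmax) (a11bar gam S0 J u1) x1 (d1a11 x1)) :
  let a11_1 := fun x : R * R => - d1a11 (fst x) in
  let a_2 := fun x : R * R => - abar gam S0 J u1 E du (fst x) in
  let c_ := fun (m : nat) (x : R * R) =>
      - 2 * abar gam S0 J u1 E du (fst x) - (2 * INR m - 1) * d1a11 (fst x) in
  (forall L, 0 < L < lmax ->
     exists lam, 0 < lam /\
       (forall x, clOmega L x -> lam <= a11_1 x) /\
       (forall x, clOmega L x -> lam <= a_2 x) /\
       (forall (m : nat), (m <= 3)%nat -> forall x, clOmega L x -> lam <= c_ m x))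
  /\
  (exists A1 : R -> R,
     (forall L, 0 < L < lmax -> is_min_on (clOmega L) a11_1 (A1 L)) /\
     filterlim A1 (at_left lmax) (locally 0))
  /\
  (exists A2 : R -> R,
     (forall L, 0 < L < lmax -> is_min_on (clOmega L) a_2 (A2 L)) /\
     filterlim A2 (at_left lmax) (locally 0))
  /\
  (forall (m : nat), (m <= 3)%nat ->
     exists Cm : R -> R,
       (forall L, 0 < L < lmax -> is_min_on (clOmega L) (c_ m) (Cm L)) /\
       filterlim Cm (at_left lmax) (locally 0)).
Proof.
  intros a11_1 a_2 c_.
  set (K := gam * S0 * Rpower J (gam - 1)).
  assert (HK : 0 < K) by (pose proof (Rpower_pos J (gam - 1)); unfold K;
                          apply Rmult_lt_0_compat; [apply Rmult_lt_0_compat |]; lra).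
  assert (Hcoef := sol_coefficients gam zeta0 S0 J u0 E0 lmax u1 E du d1a11
                     ltac:(lra) HS0 ltac:(lra) Hsol Hd1a11).
  assert (Hprofile := fun al be f Hal Hbe =>
    sol_profile_min_vanishes gam zeta0 S0 J u0 E0 lmax u1 E du K al be f
      HK Hal Hbe (proj1 Hu0) Hsol Hlim).
  destruct (Hprofile (gam + 1) 0 (fun x1 => - d1a11 x1) ltac:(lra) ltac:(lra))
    as [A1 [HA1 HA1lim]]; [apply Hcoef |].
  destruct (Hprofile gam 1 (fun x1 => - abar gam S0 J u1 E du x1) ltac:(lra) ltac:(lra))
    as [A2 [HA2 HA2lim]]; [apply Hcoef |].
  (* c_m = 2 a_2 + (2m - 1) a11_1; its profile has al = 2 gam + (2m - 1)(gam + 1) >= gam - 1 > 0 *)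
  assert (HC : forall m : nat, exists Cm, vanishing_clOmega_minima lmax (c_ m) Cm).
  { intros m. pose proof (pos_INR m).
    apply (Hprofile (2 * gam + (2 * INR m - 1) * (gam + 1)) 2
             (fun x1 => - 2 * abar gam S0 J u1 E du x1 - (2 * INR m - 1) * d1a11 x1));
      [nra | lra |].
    intros x Hx. destruct (Hcoef x Hx) as [Hd Ha].
    replace (- 2 * abar gam S0 J u1 E du x - (2 * INR m - 1) * d1a11 x)
      with (2 * - abar gam S0 J u1 E du x + (2 * INR m - 1) * - d1a11 x) by ring.
    rewrite Hd, Ha. unfold coef_profile, Rdiv, K. ring. }
  split; [| split; [| split]].
  - intros L HL. destruct (HC 0%nat) as [C0 [HC0 _]].
    destruct (HA1 L HL) as [[_ HA1L] HA1pos], (HA2 L HL) as [[_ HA2L] HA2pos],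
      (HC0 L HL) as [[_ HC0L] HC0pos].
    destruct (uniform_lower_bound (clOmega L) a11_1 a_2 c_ _ _ _ HA1pos HA2pos HC0pos
                HA1L HA2L HC0L) as [lam [Hlam [Hlam1 [Hlam2 Hlamc]]]].
    { intros m x. unfold c_, a11_1. simpl INR. ring. }
    exists lam. split; [| split; [| split]]; auto.
  - exists A1. split; [intros L HL; apply HA1, HL | exact HA1lim].
  - exists A2. split; [intros L HL; apply HA2, HL | exact HA2lim].
  - intros m _. destruct (HC m) as [Cm [HCm HCmlim]].
    exists Cm. split; [intros L HL; apply HCm, HL | exact HCmlim].
Qed.
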